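(* Let $M := \langle X \mid R\rangle$ and let $Y := \{x\in X \mid \exists\, a,b,c\in\langle X\rangle \text{ such that } (axb,c)\in R \text{ or } (c,axb)\in R\}$. If $M$ has accepted elasticity and $X \neq Y$, then $M$ is fully elastic.
   Context: For a set $X$, $\langle X\rangle$ is the free monoid on $X$ (identity $1$); $M=\langle X\mid R\rangle$ is the monoid presented by generators $X$ and relations $R\subseteq\langle X\rangle\times\langle X\rangle$. $|a|$ is word length; $a=_M b$ means equal images in $M$. $\mathsf{L}_M(a) := \{|b| : b\in\langle X\rangle,\ b=_M a\}$, $\mathcal{L}(M):=\{\mathsf{L}_M(a): a\in\langle X\rangle\}$. For $L\subseteq\mathbb{N}$, $\rho(L) := \sup(L\cap\mathbb{N}^+)/\min(L\cap\mathbb{N}^+)\in\mathbb{Q}^+\cup\{\infty\}$ if $L\cap\mathbb{N}^+\neq\emptyset$, and $\rho(L):=0$ otherwise. $\rho(M) := \sup\{\rho(L) : L\in\mathcal{L}(M)\}$. $M$ has accepted elasticity if $\rho(M) = \rho(L) < \infty$ for some $L\in\mathcal{L}(M)$. $M$ is fully elastic if for every $q\in\mathbb{Q}$ with $1<q<\rho(M)$ there is $L\in\mathcal{L}(M)$ with $\rho(L) = q$. *)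

From HB Require Import structures.
From mathcomp Require Import all_boot all_order all_algebra.
From mathcomp Require Import all_classical all_reals.
From mathcomp Require Import ereal Rstruct.
Set Implicit Arguments. Unset Strict Implicit. Unset Printing Implicit Defensive.
Import Order.TTheory GRing.Theory Num.Theory.
Local Open Scope classical_set_scope.
Local Open Scope ring_scope.
Local Open Scope ereal_scope.

(* Words over X are elements of seq X (the free monoid <X>, identity [::]).
   A presentation is given by a set of relations R on words. *)

(* The congruence on <X> generated by R: a =_M b with M = <X | R>. *)
Inductive Meq (X : Type) (R : set (seq X * seq X)) : seq X -> seq X -> Prop :=
| Meq_base u v : R (u, v) -> Meq R u v
| Meq_refl u : Meq R u u
| Meq_sym u v : Meq R u v -> Meq R v u
| Meq_trans u v w : Meq R u v -> Meq R v w -> Meq R u w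
| Meq_cat u u' v v' : Meq R u u' -> Meq R v v' -> Meq R (u ++ v) (u' ++ v').

Definition lenset (X : Type) (R : set (seq X * seq X)) (a : seq X) : set nat :=
  [set size b | b in [set b | Meq R b a]].

Definition lensets (X : Type) (R : set (seq X * seq X)) : set (set nat) :=
  [set lenset R a | a in [set: seq X]].

Definition rho (L : set nat) : \bar Rdefinitions.R :=
  let S := [set (n%:R)%:E | n in [set n | L n /\ (0 < n)%N]] in
  if asbool (exists n, L n /\ (0 < n)%N)
  then ereal_sup S * ((fine (ereal_inf S))^-1)%:E
  else 0.

Definition rhoM (X : Type) (R : set (seq X * seq X)) : \bar Rdefinitions.R :=
  ereal_sup [set rho L | L in lensets R].

Definition accepted_elasticity (X : Type) (R : set (seq X * seq X)) : Prop :=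
  exists2 L, lensets R L & rhoM R = rho L /\ rho L < +oo.

Definition fully_elastic (X : Type) (R : set (seq X * seq X)) : Prop :=
  forall q : rat, (1 < q)%R -> ((ratr q)%:E < rhoM R) ->
    exists2 L, lensets R L & rho L = (ratr q)%:E.

Definition relgens (X : Type) (R : set (seq X * seq X)) : set X :=
  [set x | exists a b c : seq X,
     R (a ++ x :: b, c) \/ R (c, a ++ x :: b)].

(* A generator x not occurring in any relation is invisible to the relations:
   erasing x and counting x are both invariant under =_M.  Hence for an
   x-free word w the length set of w x^n is L(w) + n.  Accepted elasticity
   gives a word a whose extremal lengths S, m realise rho(M) = S/m; erasing x
   from a does not decrease this ratio, so rho(M) is also realised at an
   x-free word, and then (by maximality of S/m) at all its powers w^k, with
   extremal lengths kS, km.  For q = p/r with 1 < q < S/m, padding w^(p-r)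
   with n = rS - pm copies of x yields the ratio (kS + n)/(km + n) = p/r. *)
From mathcomp Require Import all_boot all_order all_algebra.
From mathcomp Require Import all_classical all_reals.
From mathcomp Require Import ereal Rstruct zify.
Set Implicit Arguments. Unset Strict Implicit. Unset Printing Implicit Defensive.
Import Order.TTheory GRing.Theory Num.Theory.
Local Open Scope classical_set_scope.
Notation RR := Rdefinitions.R.

Section NatRatio.
Local Open Scope ring_scope.
Variables a b c d : nat.
Hypotheses (b_gt0 : (0 < b)%N) (d_gt0 : (0 < d)%N).

Lemma ler_nat_div : (a%:R / b%:R <= c%:R / d%:R :> RR) = (a * d <= c * b)%N.
Proof. by rewrite ler_pdivrMr ?ltr0n // mulrAC ler_pdivlMr ?ltr0n // -!natrM ler_nat. Qed.

Lemma ltr_nat_div : (a%:R / b%:R < c%:R / d%:R :> RR) = (a * d < c * b)%N.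
Proof. by rewrite ltr_pdivrMr ?ltr0n // mulrAC ltr_pdivlMr ?ltr0n // -!natrM ltr_nat. Qed.

Lemma eqr_nat_div : (a%:R / b%:R == c%:R / d%:R :> RR) = (a * d == c * b)%N.
Proof. by rewrite eqr_div ?pnatr_eq0 -?lt0n // -!natrM eqr_nat. Qed.

End NatRatio.

Lemma ratr_gt1_nat_div (q : rat) : (1 < q)%R ->
  exists p r : nat, [/\ (0 < r)%N, (r < p)%N & ratr q = (p%:R / r%:R : RR)%R].
Proof.
move=> q_gt1; have q_gt0 : (0 < q)%R by apply: lt_trans q_gt1.
have num_ge0 : (0 <= numq q)%R by rewrite numq_ge0 ltW.
have den_gt0 := denq_gt0 q.
have ratr_q : ratr q = ((`|numq q|%N)%:R / (`|denq q|%N)%:R : RR)%R.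
  by rewrite /ratr -(gez0_abs num_ge0) -(gez0_abs (ltW den_gt0)) !pmulrn.
exists `|numq q|%N, `|denq q|%N; split => //; first by rewrite absz_gt0 gt_eqF.
have : ((1%N)%:R / (1%N)%:R < ratr q :> RR)%R.
  by rewrite divr1 -(rmorph1 (@ratr RR)) ltr_rat.
by rewrite ratr_q ltr_nat_div ?absz_gt0 ?gt_eqF // mul1n muln1.
Qed.

Section Rho.
Local Open Scope ereal_scope.
Implicit Types (L : set nat) (S m : nat).

Definition extremal L S m :=
  [/\ L S, L m, (0 < m)%N & forall n, L n -> (0 < n)%N -> (m <= n <= S)%N].

Lemma extremal_le_max L S m n : extremal L S m -> L n -> (0 < n)%N -> (n <= S)%N.
Proof. by case=> _ _ _ ext Ln n_gt0; case/andP: (ext n Ln n_gt0). Qed.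

Lemma extremal_min_le L S m n : extremal L S m -> L n -> (0 < n)%N -> (m <= n)%N.
Proof. by case=> _ _ _ ext Ln n_gt0; case/andP: (ext n Ln n_gt0). Qed.

Lemma extremal_max_gt0 L S m : extremal L S m -> (0 < S)%N.
Proof.
by move=> ext; case: (ext) => _ Lm m_gt0 _; apply: leq_trans (extremal_le_max ext Lm m_gt0).
Qed.

Lemma rho_extremal L S m : extremal L S m -> rho L = (S%:R / m%:R : RR)%R%:E.
Proof.
move=> ext; have [LS Lm m_gt0 _] := ext; have S_gt0 := extremal_max_gt0 ext.
rewrite /rho asboolT; last by exists S.
set E := [set _ | _ in _].
have -> : ereal_sup E = (S%:R : RR)%:E.
  apply/eqP; rewrite eq_le ereal_sup_ubound ?andbT; last by exists S.
  by apply: ge_ereal_sup => _ [n [Ln n_gt0] <-]; rewrite lee_fin ler_nat (extremal_le_max ext).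
suff -> : ereal_inf E = (m%:R : RR)%:E by [].
apply/eqP; rewrite eq_le ereal_inf_lbound /=; last by exists m.
by apply: le_ereal_inf_tmp => _ [n [Ln n_gt0] <-]; rewrite lee_fin ler_nat (extremal_min_le ext).
Qed.

Lemma rho_unbounded L s : L s -> (0 < s)%N ->
  (forall B, exists2 n, L n & (B < n)%N) -> rho L = +oo.
Proof.
move=> Ls s_gt0 unbounded; rewrite /rho asboolT; last by exists s.
set E := [set _ | _ in _].
have inf_ge1 : 1 <= ereal_inf E.
  by apply: le_ereal_inf_tmp => _ [n [_ n_gt0] <-]; rewrite lee_fin ler1n.
have inf_fin : ereal_inf E <= (s%:R : RR)%:E by apply: ereal_inf_lbound; exists s.
have -> : ereal_sup E = +oo.
  have s_le_sup : (s%:R : RR)%:E <= ereal_sup E by apply: ereal_sup_ubound; exists s.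
  case sup_r : (ereal_sup E) s_le_sup => [r| |] // _.
  have [n Ln r_lt_n] := unbounded (Num.Def.archi_bound r).
  have : (n%:R : RR)%:E <= ereal_sup E.
    by apply: ereal_sup_ubound; exists n => //; split => //; apply: leq_ltn_trans r_lt_n.
  rewrite sup_r lee_fin => n_le_r.
  have := le_lt_trans (le_trans n_le_r (ler_norm r)) (unstable.ltr_norm_bound r).
  by rewrite ltr_nat ltnNge (ltnW r_lt_n).
apply: gt0_mulye; rewrite lte_fin invr_gt0.
move: inf_ge1 inf_fin; case: (ereal_inf E) => [r| |] //.
by rewrite lee_fin => /(lt_le_trans ltr01).
Qed.

Lemma extremal_exists L s : rho L < +oo -> L s -> (0 < s)%N ->
  exists S m, extremal L S m.
Proof.
move=> rho_fin Ls s_gt0.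
have [B L_le_B] : exists B, forall n, L n -> (n <= B)%N.
  apply: contrapT => unbounded; move: rho_fin.
  rewrite (rho_unbounded Ls s_gt0) ?ltxx // => B; apply: contrapT => L_le_B.
  apply: unbounded; exists B => n Ln; rewrite leqNgt; apply/negP => B_lt_n.
  by apply: L_le_B; exists n.
pose P n := `[< L n /\ (0 < n)%N >].
have exP : exists n, P n by exists s; apply/asboolP.
have [S /asboolP [LS _] S_max] := ex_maxnP exP (fun n Pn => L_le_B n (proj1 (asboolW Pn))).
have [m /asboolP [Lm m_gt0] m_min] := ex_minnP exP.
exists S, m; split=> // n Ln n_gt0.
by rewrite m_min ?S_max //; apply/asboolP.
Qed.

Lemma rho_gt0_elem L : 0 < rho L -> exists2 n, L n & (0 < n)%N.
Proof.
rewrite /rho; case: asboolP => [[n [Ln n_gt0]] _|]; first by exists n.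
by rewrite ltxx.
Qed.

End Rho.

Section Presentation.
Variables (X : Type) (R : set (seq X * seq X)).
Implicit Types (u v w : seq X).

Definition wpow k w := flatten (nseq k w).

Lemma size_wpow k w : size (wpow k w) = (k * size w)%N.
Proof. by elim: k => //= k IH; rewrite size_cat IH mulSn. Qed.

Lemma Meq_wpow k u v : Meq R u v -> Meq R (wpow k u) (wpow k v).
Proof. by move=> uv; elim: k => [|k IH] /=; [apply: Meq_refl | apply: Meq_cat]. Qed.

Lemma lensetP w n : lenset R w n <-> exists2 b, Meq R b w & size b = n.
Proof. by split => [[b wb <-]|[b wb <-]]; exists b. Qed.

Lemma lenset_size w : lenset R w (size w).
Proof. by apply/lensetP; exists w => //; apply: Meq_refl. Qed.

Lemma lenset_cat u v s t : lenset R u s -> lenset R v t -> lenset R (u ++ v) (s + t).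
Proof.
move=> /lensetP [b ub <-] /lensetP [c vc <-]; apply/lensetP.
by exists (b ++ c); [apply: Meq_cat | rewrite size_cat].
Qed.

Lemma lenset_wpow k w n : lenset R w n -> lenset R (wpow k w) (k * n).
Proof.
move=> /lensetP [b wb <-]; apply/lensetP.
by exists (wpow k b); [apply: Meq_wpow | rewrite size_wpow].
Qed.

Lemma rho_le_rhoM w : (rho (lenset R w) <= rhoM R)%E.
Proof. by apply: ereal_sup_ubound; exists (lenset R w) => //; exists w. Qed.

Section FiniteElasticity.
Hypothesis rho_fin : forall w, (rho (lenset R w) < +oo)%E.

(* Otherwise all powers of z equal the empty word, so L([]) is unbounded. *)
Lemma Meq_nil z : Meq R z [::] -> z = [::].
Proof.
case: z => [//|y z'] z_nil; set z := y :: z' in z_nil *.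
have Lnil k : lenset R [::] (k * size z).
  apply/lensetP; exists (wpow k z); last by rewrite size_wpow.
  have -> : [::] = wpow k [::] by elim: k.
  exact: Meq_wpow.
have [S [m ext]] := extremal_exists (rho_fin [::]) (Lnil 1%N) isT.
by have := extremal_le_max ext (Lnil S.+1) isT; rewrite /= mulnS; lia.
Qed.

Lemma lenset_gt0 w n l : lenset R w n -> (0 < n)%N -> lenset R w l -> (0 < l)%N.
Proof.
move=> /lensetP [z wz <-] z_gt0 /lensetP [b wb <-].
rewrite lt0n; apply/negP => /eqP /size0nil b_nil; move: z_gt0; rewrite (@Meq_nil z) //.
by apply: Meq_trans wz _; rewrite -b_nil; apply: Meq_sym.
Qed.

End FiniteElasticity.

Section Erase.
Variables (x : X) (xNY : ~ relgens R x).

Let isx y := `[< y = x >].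
Definition erase w := seq.filter (predC isx) w.
Definition xfree w := ~~ has isx w.

Lemma xfree_relation u v : R (u, v) -> xfree u /\ xfree v.
Proof.
have has_isx w : has isx w -> exists a b, w = a ++ x :: b.
  elim: w => //= y w IH /orP[/asboolP -> | /IH [a [b ->]]]; first by exists [::], w.
  by exists (y :: a), b.
move=> uv; split; apply/negP => /has_isx [a [b e]]; apply: xNY; exists a, b;
  [exists v; left | exists u; right]; by rewrite -e.
Qed.

Lemma erase_xfree w : xfree w -> erase w = w.
Proof. by move=> w_free; apply/all_filterP; rewrite all_predC. Qed.

Lemma count_xfree w : xfree w -> count isx w = 0%N.
Proof. by move=> w_free; apply/eqP; rewrite eqn0Ngt -has_count. Qed.

Lemma xfree_erase w : xfree (erase w).
Proof. by rewrite /xfree -all_predC filter_all. Qed.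

Lemma xfree_wpow k w : xfree w -> xfree (wpow k w).
Proof.
by move=> w_free; elim: k => //= k IH; rewrite /xfree has_cat negb_or; apply/andP.
Qed.

Lemma erase_cat u v : erase (u ++ v) = erase u ++ erase v.
Proof. exact: filter_cat. Qed.

Lemma size_erase w : size w = (size (erase w) + count isx w)%N.
Proof. by rewrite /erase size_filter addnC count_predC. Qed.

Lemma Meq_erase_count u v : Meq R u v ->
  Meq R (erase u) (erase v) /\ count isx u = count isx v.
Proof.
elim => {u v}.
- move=> u v uv; have [u_free v_free] := xfree_relation uv.
  by rewrite !erase_xfree // !count_xfree //; split => //; apply: Meq_base.
- by move=> u; split => //; apply: Meq_refl.
- by move=> u v _ [uv cuv]; split; [apply: Meq_sym|].
- by move=> u v w _ [uv cuv] _ [vw cvw]; split; [apply: Meq_trans vw | rewrite cuv].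
- move=> u u' v v' _ [uu' cuu'] _ [vv' cvv'].
  by rewrite !erase_cat !count_cat cuu' cvv'; split => //; apply: Meq_cat.
Qed.

Lemma lenset_erase w n : lenset R w n ->
  (count isx w <= n)%N /\ lenset R (erase w) (n - count isx w).
Proof.
move=> /lensetP [b wb <-]; have [ewb cwb] := Meq_erase_count wb.
by rewrite size_erase -cwb addnK leq_addl; split => //; apply/lensetP; exists (erase b).
Qed.

Lemma lenset_pad w k l : xfree w ->
  lenset R (w ++ nseq k x) l <-> exists2 l', lenset R w l' & l = (l' + k)%N.
Proof.
move=> w_free; split => [Ll | [l' Ll' ->]]; last first.
  by rewrite -[in X in (_ + X)%N](size_nseq k x); apply/lenset_cat/lenset_size.
have isx_x : isx x by apply/asboolP.
have [count_le /lensetP [b eb size_b]] := lenset_erase Ll.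
have erase_nseq j : erase (nseq j x) = [::].
  by elim: j => //= j IH; rewrite /erase /= isx_x.
have count_nseq' : count isx (w ++ nseq k x) = k.
  by rewrite count_cat count_xfree // count_nseq isx_x mul1n.
rewrite erase_cat erase_nseq cats0 erase_xfree // in eb.
by exists (size b); [apply/lensetP; exists b | rewrite size_b count_nseq' subnK // -count_nseq'].
Qed.

Lemma extremal_pad w S m n : (forall u, (rho (lenset R u) < +oo)%E) -> xfree w ->
  extremal (lenset R w) S m -> extremal (lenset R (w ++ nseq n x)) (S + n) (m + n).
Proof.
move=> rho_fin w_free ext; have [LS Lm m_gt0 _] := ext.
split; rewrite ?lenset_pad //; [by exists S | by exists m | by rewrite addn_gt0 m_gt0 |].
move=> _ /lenset_pad [] // l Ll -> _; have l_gt0 := lenset_gt0 rho_fin Lm m_gt0 Ll.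
by rewrite !leq_add2r (extremal_min_le ext) ?(extremal_le_max ext).
Qed.

End Erase.
End Presentation.

Lemma leq_mul_subn c m S : (m <= S)%N -> (S * (m - c) <= (S - c) * m)%N.
Proof. by move=> m_le_S; rewrite mulnBr mulnBl leq_sub2l // mulnC leq_mul2r m_le_S orbT. Qed.

Section ElasticityAt.
Variables (X : Type) (R : set (seq X * seq X)).

Definition elasticity_at (w : seq X) (S m : nat) :=
  extremal (lenset R w) S m /\ rhoM R = (S%:R / m%:R : RR)%R%:E.

Variables (w : seq X) (S m : nat).
Hypothesis at_w : elasticity_at w S m.

Lemma elasticity_at_fin u : (rho (lenset R u) < +oo)%E.
Proof.
by case: at_w => _ rhoM_eq; apply: le_lt_trans (rho_le_rhoM R u) _; rewrite rhoM_eq ltry.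
Qed.

Lemma elasticity_at_max u S' m' : extremal (lenset R u) S' m' -> (S' * m <= S * m')%N.
Proof.
case: at_w => -[_ _ m_gt0 _] rhoM_eq ext'; have [_ _ m'_gt0 _] := ext'.
by have := rho_le_rhoM R u; rewrite rhoM_eq (rho_extremal ext') lee_fin ler_nat_div.
Qed.

Lemma elasticity_at_gt_ratio p r : (0 < r)%N ->
  ((p%:R / r%:R : RR)%R%:E < rhoM R)%E -> (p * m < S * r)%N.
Proof. by case: at_w => -[_ _ m_gt0 _] -> r_gt0; rewrite lte_fin ltr_nat_div. Qed.

Lemma elasticity_at_wpow k : (0 < k)%N -> elasticity_at (wpow k w) (k * S) (k * m).
Proof.
move=> k_gt0; have [[LS Lm m_gt0 _] rhoM_eq] := at_w.
have kS_gt0 : (0 < k * S)%N by rewrite muln_gt0 k_gt0 (extremal_max_gt0 at_w.1).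
have km_gt0 : (0 < k * m)%N by rewrite muln_gt0 k_gt0.
have [LkS Lkm] := (lenset_wpow k LS, lenset_wpow k Lm).
have [S' [m' ext']] := extremal_exists (elasticity_at_fin _) LkS kS_gt0.
have kS_le := extremal_le_max ext' LkS kS_gt0; have m'_le := extremal_min_le ext' Lkm km_gt0.
have ratio := elasticity_at_max ext'.
have eS' : S' = (k * S)%N.
  apply/eqP; rewrite eqn_leq kS_le andbT -(leq_pmul2r m_gt0) (leq_trans ratio) //.
  by rewrite (mulnC k) -mulnA leq_mul2l m'_le orbT.
have em' : m' = (k * m)%N.
  apply/eqP; rewrite eqn_leq m'_le -(leq_pmul2l (extremal_max_gt0 at_w.1)) /=.
  by apply: leq_trans _ ratio; rewrite mulnA (mulnC S) leq_mul2r kS_le orbT.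
split; first by rewrite -eS' -em'.
by rewrite rhoM_eq; congr (_%:E); apply/eqP; rewrite eqr_nat_div // mulnCA mulnA.
Qed.

(* Erasing the c occurrences of x turns the lengths S, m into S - c, m - c,
   whose ratio is at least S/m. *)
Lemma elasticity_at_erase x : ~ relgens R x -> (m < S)%N ->
  exists S' m', elasticity_at (erase x w) S' m'.
Proof.
move=> xNY m_lt_S; have [[LS Lm m_gt0 _] rhoM_eq] := at_w.
have [cS LS'] := lenset_erase xNY LS; have [cm Lm'] := lenset_erase xNY Lm.
have Sc_gt0 : (0 < S - count (fun y => `[< y = x >]) w)%N.
  by rewrite subn_gt0; apply: leq_ltn_trans cm m_lt_S.
have [S' [m' ext']] := extremal_exists (elasticity_at_fin _) LS' Sc_gt0.
have mc_gt0 := lenset_gt0 elasticity_at_fin LS' Sc_gt0 Lm'.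
have S'_ge := extremal_le_max ext' LS' Sc_gt0; have m'_le := extremal_min_le ext' Lm' mc_gt0.
have ratio := elasticity_at_max ext'; have [_ _ m'_gt0 _] := ext'.
exists S', m'; split => //; rewrite rhoM_eq; congr (_%:E).
apply/eqP; rewrite eqr_nat_div // eqn_leq ratio andbT.
apply: leq_trans (leq_mul (leqnn S) m'_le) _.
apply: leq_trans (leq_mul_subn _ (ltnW m_lt_S)) _.
by rewrite leq_mul2r S'_ge orbT.
Qed.

End ElasticityAt.

Lemma pad_ratio (p r S m : nat) : (r < p)%N -> (p * m <= r * S)%N ->
  (((p - r) * S + (r * S - p * m)) * r = p * ((p - r) * m + (r * S - p * m)))%N.
Proof. by move=> *; nia. Qed.

Theorem theorem4p5 (X : Type) (R : set (seq X * seq X)) :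
  accepted_elasticity R -> [set: X] <> relgens R -> fully_elastic R.
Proof.
move=> [_ [a _ <-] [rhoM_a rho_a_fin]] Y_neq q q_gt1 q_lt.
have [x xNY] : exists x, ~ relgens R x by apply/setTPn; apply/eqP => /esym.
have [p [r [r_gt0 r_lt_p ratr_q]]] := ratr_gt1_nat_div q_gt1.
rewrite ratr_q in q_lt *.
have [s La_s s_gt0] : exists2 s, lenset R a s & (0 < s)%N.
  by apply: rho_gt0_elem; rewrite -rhoM_a; apply: le_lt_trans q_lt;
    rewrite lee_fin divr_ge0.
have [S [m ext_a]] := extremal_exists rho_a_fin La_s s_gt0.
have at_a : elasticity_at R a S m by split; rewrite // rhoM_a (rho_extremal ext_a).
have m_lt_S : (m < S)%N.
  rewrite ltnNge; apply/negP => S_le_m; have := elasticity_at_gt_ratio at_a r_gt0 q_lt.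
  by rewrite mulnC ltnNge leq_mul // ltnW.
have [S1 [m1 at1]] := elasticity_at_erase at_a xNY m_lt_S.
have pm_le_rS : (p * m1 <= r * S1)%N.
  by rewrite [r * _]mulnC ltnW // (elasticity_at_gt_ratio at1).
have k_gt0 : (0 < p - r)%N by rewrite subn_gt0.
have [ext_k _] := elasticity_at_wpow at1 k_gt0.
set n := (r * S1 - p * m1)%N; set w := wpow (p - r) (erase x a).
exists (lenset R (w ++ nseq n x)); first by exists (w ++ nseq n x).
have [_ _ m1_gt0 _] := at1.1.
rewrite (rho_extremal (extremal_pad xNY n (elasticity_at_fin at1)
  (xfree_wpow _ (xfree_erase x a)) ext_k)).
congr (_%:E); apply/eqP; rewrite eqr_nat_div ?addn_gt0 ?muln_gt0 ?k_gt0 ?m1_gt0 //.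
by apply/eqP; apply: pad_ratio.
Qed.
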